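(* Let $\mathcal{B}$ be a $\sigma$-algebra on a nonempty set $E$. Every $\sigma$-maxitive measure of bounded variation on $\mathcal{B}$ is finite and essential.
   Context: A $\sigma$-maxitive measure on $\mathcal{B}$ is a map $\nu:\mathcal{B}\to[0,\infty]$ with $\nu(\emptyset)=0$, $\nu(B\cup B')=\max(\nu(B),\nu(B'))$ for all $B,B'\in\mathcal{B}$, and $\nu(\bigcup_nB_n)=\lim_n\nu(B_n)$ for every nondecreasing sequence $(B_n)$ in $\mathcal{B}$. It is of bounded variation if $|\nu|:=\sup_\pi\sum_{B\in\pi}\nu(B)<\infty$, the supremum being over all finite partitions $\pi$ of $E$ into elements of $\mathcal{B}$. It is finite if $\nu(B)<\infty$ for all $B\in\mathcal{B}$, and essential if there is a $\sigma$-finite $\sigma$-additive measure $m$ on $\mathcal{B}$ with $\nu(B)>0\iff m(B)>0$ for all $B\in\mathcal{B}$. *)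

From HB Require Import structures.
From mathcomp Require Import all_boot all_order all_algebra.
From mathcomp Require Import all_classical all_reals all_analysis.
Set Implicit Arguments. Unset Strict Implicit. Unset Printing Implicit Defensive.
Import Order.TTheory GRing.Theory Num.Theory.
Local Open Scope classical_set_scope.
Local Open Scope ring_scope.
Local Open Scope ereal_scope.

Section maxitive.
Context d (T : measurableType d) (R : realType).
Implicit Types nu : set T -> \bar R.

Definition smax_sigma_maxitive nu : Prop :=
  [/\ (forall B, measurable B -> 0 <= nu B),
      nu set0 = 0,
      (forall B B', measurable B -> measurable B' ->
          nu (B `|` B') = maxe (nu B) (nu B')) &
      (forall B : nat -> set T, (forall n, measurable (B n)) ->
          {homo B : n m / (n <= m)%N >-> n `<=` m} ->
          (nu \o B) @ \oo --> nu (\bigcup_n B n))].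

Definition smax_partition (n : nat) (F : nat -> set T) : Prop :=
  [/\ (forall i, (i < n)%N -> measurable (F i)),
      trivIset `I_n F &
      \bigcup_(i in `I_n) F i = [set: T]].

Definition smax_variation nu : \bar R :=
  ereal_sup [set s | exists n F, smax_partition n F /\
                      s = \sum_(i < n) nu (F i)].

Definition smax_bounded_variation nu : Prop := smax_variation nu < +oo.

Definition smax_finite nu : Prop :=
  forall B, measurable B -> nu B < +oo.

Definition smax_essential nu : Prop :=
  exists m : {measure set T -> \bar R}, sigma_finite [set: T] m /\
    forall B, measurable B -> (0 < nu B <-> 0 < m B).
End maxitive.

(* The variation of nu on a set B, i.e. the supremum of the sums of nu over
   finite disjoint families of measurable subsets of B, is a sigma-additive
   measure: additivity because nu is monotone and subadditive, sigma-
   subadditivity because sigma-maxitivity makes nu countably subadditive.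
   Its total mass is at most the total variation |nu| < +oo, so it and the
   smaller nu are finite; and it has the same null sets as nu, since nu B = 0
   forces nu to vanish on every measurable subset of B. *)

From HB Require Import structures.
From mathcomp Require Import all_boot all_order all_algebra.
From mathcomp Require Import all_classical all_reals all_analysis.
Set Implicit Arguments. Unset Strict Implicit. Unset Printing Implicit Defensive.
Import Order.TTheory GRing.Theory Num.Theory.
Local Open Scope classical_set_scope.
Local Open Scope ring_scope.
Local Open Scope ereal_scope.

Section disjoint_subfamily.
Context d (T : measurableType d).

Definition disjoint_subfamily (B : set T) (n : nat) (F : nat -> set T) :=
  (forall i, (i < n)%N -> measurable (F i) /\ F i `<=` B) /\ trivIset `I_n F.

Lemma disjoint_subfamilyS A B n F : A `<=` B ->
  disjoint_subfamily A n F -> disjoint_subfamily B n F.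
Proof.
move=> AB [mF tF]; split => // i ilt.
by have [mFi FiA] := mF i ilt; split => //; apply: subset_trans AB.
Qed.

Lemma disjoint_subfamilyI B C n F : measurable C ->
  disjoint_subfamily B n F -> disjoint_subfamily C n (fun i => F i `&` C).
Proof.
move=> mC [mF tF]; split => [i ilt|i j Ii Ij [x [[Fix _] [Fjx _]]]].
  by have [mFi _] := mF i ilt; split; [exact: measurableI | exact: subIsetr].
by apply: tF => //; exists x.
Qed.

Lemma disjoint_subfamily_cat A B n k F G : A `&` B = set0 ->
  disjoint_subfamily A n F -> disjoint_subfamily B k G ->
  disjoint_subfamily (A `|` B) (k + n)
    (fun i => if (i < k)%N then G i else F (i - k)%N).
Proof.
move=> AB0 [mF tF] [mG tG].
have ltn_subk i : (i < k + n)%N -> ~~ (i < k)%N -> (i - k < n)%N.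
  by move=> ilt; rewrite -leqNgt => ki; rewrite ltn_subLR.
have AB x : A x -> B x -> False.
  by move=> Ax Bx; have : (A `&` B) x by []; rewrite AB0.
split => [i ilt|i j /= ilt jlt [x []]].
  case: ifPn => ik.
    by have [mGi GiB] := mG i ik; split=> // ? /GiB; right.
  by have [mFi FiA] := mF _ (ltn_subk i ilt ik); split=> // ? /FiA; left.
case: ifPn => ik; case: ifPn => jk.
- by move=> Gix Gjx; apply: tG => //; exists x.
- by move=> /(mG i ik).2 Bx /(mF _ (ltn_subk j jlt jk)).2 /AB.
- by move=> /(mF _ (ltn_subk i ilt ik)).2 /AB + /(mG j jk).2.
- move=> Fix Fjx; have e : (i - k = j - k)%N.
    by apply: tF; [exact: ltn_subk | exact: ltn_subk | exists x].
  by move: ik jk; rewrite -!leqNgt => ki kj; rewrite -(subnK ki) -(subnK kj) e.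
Qed.

Lemma disjoint_subfamily_partition n F : disjoint_subfamily [set: T] n F ->
  smax_partition n.+1
    (fun i => if (i < n)%N then F i else ~` \big[setU/set0]_(j < n) F j).
Proof.
move=> [mF tF]; set U := \big[setU/set0]_(j < n) F j.
have Fsub i : (i < n)%N -> F i `<=` U by move=> ilt; apply: bigsetU_sup.
split => [i _|i j /= ilt jlt [x []]|].
- case: ifP => [ilt|_]; first by have [] := mF i ilt.
  apply: measurableC; apply: bigsetU_measurable => j _.
  by have [] := mF j (ltn_ord j).
- case: ifPn => ik; case: ifPn => jk.
  + by move=> Fix Fjx; apply: tF => //; exists x.
  + by move=> Fix /(_ (Fsub i ik x Fix)).
  + by move=> /(_ (Fsub j jk x _)) + Fjx => /(_ Fjx).
  + move=> _ _; apply/eqP.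
    by rewrite eqn_leq (leq_trans (ltnSE ilt)) 1?(leq_trans (ltnSE jlt))
      // leqNgt.
- apply/seteqP; split => // x _; have [|nUx] := pselect (U x).
    rewrite /U -bigcup_mkord => -[j /= jlt Fjx].
    by exists j => /=; [exact: ltnW | rewrite jlt].
  by exists n => //=; rewrite ltnn.
Qed.

End disjoint_subfamily.

Section maxitive_set_function.
Context d (T : measurableType d) (R : realType) (nu : set T -> \bar R).
Hypothesis nu_ge0 : forall B, measurable B -> 0 <= nu B.
Hypothesis nu0 : nu set0 = 0.
Hypothesis nuU : forall A B, measurable A -> measurable B ->
  nu (A `|` B) = maxe (nu A) (nu B).

Lemma le_maxitive A B : measurable A -> measurable B -> A `<=` B ->
  nu A <= nu B.
Proof.
move=> mA mB AB; rewrite -(setDUK AB) nuU //; last exact: measurableD.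
by rewrite le_max lexx.
Qed.

Lemma maxitiveU_le A B : measurable A -> measurable B ->
  nu (A `|` B) <= nu A + nu B.
Proof.
move=> mA mB; rewrite nuU // ge_max.
by rewrite leeDl ?leeDr ?nu_ge0.
Qed.

Lemma maxitive_bigsetU_le (F : nat -> set T) n : (forall i, measurable (F i)) ->
  nu (\big[setU/set0]_(i < n) F i) <= \sum_(i < n) nu (F i).
Proof.
move=> mF; elim: n => [|n IH]; first by rewrite !big_ord0 nu0.
rewrite !big_ord_recr /=; apply: le_trans (maxitiveU_le _ _) _ => //.
  exact: bigsetU_measurable.
exact: leeD2r.
Qed.

Hypothesis nu_cvg : forall B : nat -> set T, (forall n, measurable (B n)) ->
  {homo B : n m / (n <= m)%N >-> n `<=` m} ->
  (nu \o B) @ \oo --> nu (\bigcup_n B n).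

Lemma sigma_maxitive_le_nneseries (H : set T) (F : nat -> set T) :
  measurable H -> (forall n, measurable (F n)) -> H `<=` \bigcup_n F n ->
  nu H <= \sum_(n <oo) nu (H `&` F n).
Proof.
move=> mH mF HF; pose G n := H `&` F n.
have mG n : measurable (G n) by apply: measurableI.
pose C N := \big[setU/set0]_(n < N.+1) G n.
have mC N : measurable (C N) by apply: bigsetU_measurable.
have C_homo : {homo C : n m / (n <= m)%N >-> n `<=` m}.
  by move=> n m nm; apply: subset_bigsetU.
have CH : \bigcup_n C n = H.
  by rewrite bigcup_bigsetU_bigcup -setI_bigcupr; apply/setIidl.
have nuC : (nu \o C) @ \oo --> nu H by rewrite -CH; exact: nu_cvg.
rewrite -(cvg_lim _ nuC) //; apply: lime_le; first exact: cvgP nuC.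
apply: nearW => N; apply: le_trans (maxitive_bigsetU_le _ mG) _.
rewrite -(big_mkord xpredT (fun i => nu (G i))).
by apply: nneseries_lim_ge => i _ _; apply: nu_ge0.
Qed.

End maxitive_set_function.

Section variation_on.
Context d (T : measurableType d) (R : realType) (nu : set T -> \bar R).

(* Disjoint families rather than partitions of B, so that [variation_on B] is
   nonnegative for every B, measurable or not, as a content must be. *)
Definition variation_on (B : set T) : \bar R :=
  ereal_sup [set s | exists n F, disjoint_subfamily B n F /\
                                 s = \sum_(i < n) nu (F i)].

Lemma variation_on_ub B n F : disjoint_subfamily B n F ->
  \sum_(i < n) nu (F i) <= variation_on B.
Proof. by move=> BF; apply: ereal_sup_ubound; exists n, F. Qed.

Lemma variation_on_ge0 B : 0 <= variation_on B.
Proof.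
by have := @variation_on_ub B 0 (fun=> set0); rewrite big_ord0; apply.
Qed.

Lemma le_variation_on A B : A `<=` B -> variation_on A <= variation_on B.
Proof.
move=> AB; apply: ge_ereal_sup => _ [n [F [AF ->]]].
exact/variation_on_ub/(disjoint_subfamilyS AB).
Qed.

Lemma le_variation_on_measurable B : measurable B -> nu B <= variation_on B.
Proof.
move=> mB; have := @variation_on_ub B 1 (fun=> B); rewrite big_ord1; apply.
by split => [i _|i j /=]; [split | rewrite !ltnS !leqn0 => /eqP -> /eqP ->].
Qed.

Hypothesis nu_ge0 : forall B, measurable B -> 0 <= nu B.

Lemma variation_on_setT : variation_on [set: T] <= smax_variation nu.
Proof.
apply: ge_ereal_sup => _ [n [F [TF ->]]].
have TG := disjoint_subfamily_partition TF.
apply: le_trans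
  (ereal_sup_ubound (ex_intro _ n.+1 (ex_intro _ _ (conj TG erefl)))).
rewrite big_ord_recr /= ltnn; apply: le_trans (leeDl _ _).
  by apply: lee_sum => i _; rewrite ltn_ord.
by apply: nu_ge0; have [mG _ _] := TG; have := mG n (ltnSn n); rewrite ltnn.
Qed.

Hypothesis nu0 : nu set0 = 0.

Lemma variation_on0 : variation_on set0 = 0.
Proof.
apply/le_anti; rewrite variation_on_ge0 andbT.
apply: ge_ereal_sup => _ [n [F [[F0 _] ->]]].
by rewrite big1 // => i _; have [_] := F0 i (ltn_ord i); rewrite subset0 => ->.
Qed.

Hypothesis nuU : forall A B, measurable A -> measurable B ->
  nu (A `|` B) = maxe (nu A) (nu B).

Lemma variation_onU_le A B : measurable A -> measurable B ->
  variation_on (A `|` B) <= variation_on A + variation_on B.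
Proof.
move=> mA mB; apply: ge_ereal_sup => _ [n [F [ABF ->]]].
have [mF _] := ABF.
apply: (@le_trans _ _ (\sum_(i < n) (nu (F i `&` A) + nu (F i `&` B)))).
  apply: lee_sum => i _; have [mFi FiAB] := mF i (ltn_ord i).
  rewrite -{1}(setIidl FiAB) setIUr.
  by apply: maxitiveU_le => //; apply: measurableI.
rewrite big_split; apply: leeD;
  by apply: (variation_on_ub (disjoint_subfamilyI _ ABF)).
Qed.

Lemma variation_on_gt0 B : measurable B -> (0 < variation_on B) = (0 < nu B).
Proof.
move=> mB; apply/idP/idP => [|nuB]; last first.
  exact: lt_le_trans nuB (le_variation_on_measurable mB).
apply: contraTT; rewrite -!leNgt => nuB0.
apply: ge_ereal_sup => _ [n [F [[BF _] ->]]]; apply: sume_le0 => i _.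
have [mFi FiB] := BF i (ltn_ord i).
exact: le_trans (le_maxitive nuU mFi mB FiB) nuB0.
Qed.

Hypothesis nu_bv : smax_bounded_variation nu.

Lemma variation_on_lty B : variation_on B < +oo.
Proof.
exact: le_lt_trans (le_variation_on (@subsetT _ B))
                   (le_lt_trans variation_on_setT nu_bv).
Qed.

Lemma variation_on_fin_num B : variation_on B \is a fin_num.
Proof. by rewrite ge0_fin_numE ?variation_on_ge0 ?variation_on_lty. Qed.

Lemma disjoint_subfamily_sum_fin_num B n F : disjoint_subfamily B n F ->
  \sum_(i < n) nu (F i) \is a fin_num.
Proof.
move=> BF; rewrite ge0_fin_numE.
  exact: le_lt_trans (variation_on_ub BF) (variation_on_lty B).
apply: sume_ge0 => i _; apply: nu_ge0; have [mF _] := BF.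
exact: (mF i (ltn_ord i)).1.
Qed.

Lemma variation_onU_ge A B : A `&` B = set0 ->
  variation_on A + variation_on B <= variation_on (A `|` B).
Proof.
move=> AB0; rewrite -leeBrDr ?variation_on_fin_num //.
apply: ge_ereal_sup => _ [n [F [AF ->]]].
rewrite leeBrDr ?variation_on_fin_num // addeC.
rewrite -leeBrDr ?(disjoint_subfamily_sum_fin_num AF) //.
apply: ge_ereal_sup => _ [k [G [BG ->]]].
rewrite leeBrDr ?(disjoint_subfamily_sum_fin_num AF) //.
have := variation_on_ub (disjoint_subfamily_cat AB0 AF BG).
rewrite big_split_ord /= (eq_bigr (fun i : 'I_k => nu (G i))) => [|i _].
  by rewrite (eq_bigr (fun i : 'I_n => nu (F i))) => // i _;
    rewrite ltnNge leq_addr addKn.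
by rewrite ltn_ord.
Qed.

Hypothesis nu_cvg : forall B : nat -> set T, (forall n, measurable (B n)) ->
  {homo B : n m / (n <= m)%N >-> n `<=` m} ->
  (nu \o B) @ \oo --> nu (\bigcup_n B n).

Lemma variation_on_sigma_subadditive :
  measurable_subset_sigma_subadditive variation_on.
Proof.
move=> A F mF mA AF; apply: ge_ereal_sup => _ [k [H [AH ->]]].
have [mH _] := AH.
have mHF i n : (i < k)%N -> measurable (H i `&` F n).
  by move=> ik; apply: measurableI => //; exact: (mH i ik).1.
apply: (@le_trans _ _ (\sum_(i < k) \sum_(n <oo) nu (H i `&` F n))).
  apply: lee_sum => i _; have [mHi HiA] := mH i (ltn_ord i).
  by apply: sigma_maxitive_le_nneseries => //; apply: subset_trans HiA AF.
rewrite -nneseries_sum => [|n i _]; last exact/nu_ge0/mHF.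
apply: lee_nneseries => [n _ _|n _].
  by apply: sume_ge0 => i _; exact/nu_ge0/mHF.
exact: (variation_on_ub (disjoint_subfamilyI _ AH)).
Qed.

End variation_on.

Section variation_measure.
Context d (T : measurableType d) (R : realType) (nu : set T -> \bar R).
Hypotheses (nu_smax : smax_sigma_maxitive nu)
           (nu_bv : smax_bounded_variation nu).

(* The hypotheses are arguments only so that the measure instance below can be
   keyed on [variation_measure nu_smax nu_bv]. *)
Definition variation_measure of smax_sigma_maxitive nu &
  smax_bounded_variation nu := variation_on nu.

Let nu_ge0 : forall B, measurable B -> 0 <= nu B.
Proof. by case: nu_smax. Qed.

Let nu0 : nu set0 = 0.
Proof. by case: nu_smax. Qed.

Let nuU : forall A B, measurable A -> measurable B ->
  nu (A `|` B) = maxe (nu A) (nu B).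
Proof. by case: nu_smax. Qed.

Let nu_cvg : forall B : nat -> set T, (forall n, measurable (B n)) ->
  {homo B : n m / (n <= m)%N >-> n `<=` m} ->
  (nu \o B) @ \oo --> nu (\bigcup_n B n).
Proof. by case: nu_smax. Qed.

Let variation_measure_additive2 : additive2 (variation_measure nu_smax nu_bv).
Proof.
move=> A B mA mB AB0; apply/le_anti.
by rewrite variation_onU_le // variation_onU_ge.
Qed.

Let variation_measure_semi_additive :
  measure_function.semi_additive (variation_measure nu_smax nu_bv).
Proof. exact/(additive2P (variation_on0 nu0))/variation_measure_additive2. Qed.

HB.instance Definition _ := isContent.Build d T R
  (variation_measure nu_smax nu_bv) (@variation_on_ge0 _ _ _ nu)
  variation_measure_semi_additive.

HB.instance Definition _ := Content_SigmaSubAdditive_isMeasure.Build _ _ _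
  (variation_measure nu_smax nu_bv)
  (variation_on_sigma_subadditive nu_ge0 nu0 nuU nu_cvg).

End variation_measure.

Theorem proposition3p5 (d : measure_display) (T : measurableType d)
  (R : realType) (nu : set T -> \bar R) :
  [set: T] !=set0 ->
  smax_sigma_maxitive nu -> smax_bounded_variation nu ->
  smax_finite nu /\ smax_essential nu.
Proof.
move=> _ nu_smax nu_bv; have [nu_ge0 _ nuU _] := nu_smax.
pose mu := variation_measure nu_smax nu_bv.
have mu_lty B : mu B < +oo by exact: variation_on_lty.
split=> [B mB|].
  exact: le_lt_trans (le_variation_on_measurable _ mB) (mu_lty B).
exists mu; split=> [|B mB]; last by rewrite (variation_on_gt0 nuU mB).
by apply: fin_num_fun_sigma_finite => // B _; rewrite ge0_fin_numE ?measure_ge0.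
Qed.
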